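(* Let $G$ be a cyclically $4$-edge-connected cubic graph and $e$ an edge of $G$ contained in some cyclic $4$-edge-cut of $G$. Then there exist vertex sets $A_1\subseteq A_2\subseteq\cdots\subseteq A_k$, with $B_i=V(G)\setminus A_i$, such that every cyclic $4$-edge-cut of $G$ containing $e$ equals $E(A_i,B_i)$ for some $i\in\{1,\dots,k\}$.
   Context: Graphs may have parallel edges. For a partition $\{A,B\}$ of $V(G)$, $E(A,B)$ is the set of edges between $A$ and $B$; it is a $4$-edge-cut if it has exactly four edges, and cyclic if both $G[A]$ and $G[B]$ contain a cycle. $G$ is cyclically $4$-edge-connected if it has no cyclic edge-cut with fewer than four edges. *)

(* Finite loopless multigraphs (parallel edges allowed):
   vertex type V, edge type E (both finTypes), each edge x has two distinct
   endpoints src x and tgt x. *)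
From mathcomp Require Import all_boot.
Set Implicit Arguments. Unset Strict Implicit. Unset Printing Implicit Defensive.

Section MG.
Variables (V E : finType) (src tgt : E -> V).

Definition loopless : Prop := forall x : E, src x != tgt x.

Definition incident (x : E) (v : V) : bool := (src x == v) || (tgt x == v).

Definition joins (x : E) (u w : V) : bool :=
  ((src x == u) && (tgt x == w)) || ((src x == w) && (tgt x == u)).

(* cubic: every vertex has degree 3 (loopless, so degree = #incident edges) *)
Definition cubic : Prop :=
  forall v : V, #|[set x : E | incident x v]| = 3.

(* a cycle of G[A]: distinct vertices v_0..v_{n-1} of A and distinct edges
   e_0..e_{n-1}, n >= 1, with e_i joining v_i and v_{i+1 mod n}
   (n = 2 allowed: a pair of parallel edges). *)
Definition has_cycle_in (A : {set V}) : Prop :=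
  exists (v0 : V) (x0 : E) (vs : seq V) (es : seq E),
    [/\ 0 < size vs, size es = size vs, uniq vs && uniq es,
        all (fun v => v \in A) vs &
        forall i, i < size vs ->
          joins (nth x0 es i) (nth v0 vs i) (nth v0 vs (i.+1 %% size vs))].

Definition cut (A : {set V}) : {set E} :=
  [set x : E | ((src x \in A) && (tgt x \notin A)) ||
               ((tgt x \in A) && (src x \notin A))].

Definition is_bipartition (A : {set V}) : Prop :=
  A != set0 /\ ~: A != set0.

Definition cyclic_cut (A : {set V}) : Prop :=
  has_cycle_in A /\ has_cycle_in (~: A).

Definition cyclic_4_cut (A : {set V}) : Prop :=
  is_bipartition A /\ #|cut A| = 4 /\ cyclic_cut A.

Definition cyc4conn : Prop :=
  forall A : {set V}, is_bipartition A -> cyclic_cut A -> ~ (#|cut A| < 4).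
End MG.

From Stdlib Require Import Classical ClassicalDescription.
From mathcomp Require Import all_boot zify.
From Pilot Require Import Defs.
Set Implicit Arguments. Unset Strict Implicit. Unset Printing Implicit Defensive.

(* In a cubic graph an acyclic vertex set X spans fewer than |X| edges, so degree
   counting gives |E(X, V\X)| >= |X| + 2; hence, when G is cyclically 4-edge-connected,
   every edge-cut with at most 3 edges has a side with at most one vertex.
   Let E(A, V\A) and E(C, V\C) be cyclic 4-edge-cuts through e = uv with u in A and
   u in C.  If A and C cross, counting the edges between the four quarters A∩C, A\C,
   C\A and V\(A∪C) shows that A\C and C\A are sides of 3-edge-cuts, hence single
   vertices, and that so is A∩C or V\(A∪C); then A or V\A has at
   most one inner edge, although it contains a cycle.  So the sides containing u of
   the cyclic 4-edge-cuts through e form a chain, and A_i can be taken to be the union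
   of those with at most i vertices. *)

Lemma card_sum_mem (T : finType) (S : {set T}) : #|S| = \sum_x (x \in S : nat).
Proof. by rewrite -sum1_card big_mkcond /=; apply: eq_bigr => x _; case: (x \in S). Qed.

Lemma sum_eq_mem (T : finType) (S : {set T}) a : \sum_(v in S) (a == v : nat) = (a \in S).
Proof.
rewrite big_mkcond (bigD1 a) //= eqxx big1 ?addn0 => [|v nva]; first by case: (a \in S).
by rewrite eq_sym (negbTE nva); case: (v \in S).
Qed.

Lemma exists_neq_card_gt1 (T : finType) (S : {set T}) z : 1 < #|S| -> exists2 y, y \in S & y != z.
Proof.
case/card_gt1P => a [b [aS bS ab]].
by case: (eqVneq a z) => [az|]; [exists b; rewrite // -az eq_sym | exists a].
Qed.

(* Edge counts between the four quarters of two crossing cuts: [xq] counts the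
   edges between [A :&: C] and [C :\: A], and so on. *)
Lemma uncrossing_arith (xp xq xy pq py qy : nat) :
  xq + xy + pq + py = 4 -> xp + xy + pq + qy = 4 ->
  3 <= xp + pq + py -> 3 <= xq + pq + qy -> 0 < xy ->
  [/\ xp + pq + py = 3, xq + pq + qy = 3 &
      (xp + xq + xy <= 3 /\ xp <= 1) \/ (xy + py + qy <= 3 /\ qy <= 1)].
Proof. by move=> *; split; lia. Qed.

Section Multigraph.
Variables (V E : finType) (src tgt : E -> V).
Hypothesis loopless_G : loopless src tgt.

Local Notation joins := (joins src tgt).
Local Notation incident := (incident src tgt).
Local Notation cut := (cut src tgt).
Local Notation has_cycle_in := (has_cycle_in src tgt).

Definition inner (X : {set V}) : {set E} := [set x | (src x \in X) && (tgt x \in X)].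

Definition between (U W : {set V}) : {set E} :=
  [set x | ((src x \in U) && (tgt x \in W)) || ((src x \in W) && (tgt x \in U))].

Lemma joinsC x u w : joins x u w = joins x w u.
Proof. by rewrite /Defs.joins orbC. Qed.

Lemma joins_neq x u w : joins x u w -> u != w.
Proof.
by case/orP=> /andP [/eqP <- /eqP <-]; last rewrite eq_sym; exact: loopless_G.
Qed.

Lemma joins_incident x u w v : joins x u w -> incident x v -> v = u \/ v = w.
Proof.
by case/orP=> /andP [/eqP <- /eqP <-] /orP [] /eqP ->; auto.
Qed.

Lemma incident_joins x v : incident x v -> exists w, joins x v w.
Proof.
case/orP=> /eqP <-; first by exists (tgt x); rewrite /Defs.joins !eqxx.
by exists (src x); rewrite /Defs.joins !eqxx orbT.
Qed.

Lemma inner_joins (X : {set V}) x u w : joins x u w -> u \in X -> w \in X -> x \in inner X.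
Proof.
by rewrite /inner inE; case/orP=> /andP [/eqP -> /eqP ->] uX wX; apply/andP.
Qed.

Lemma joins_inner (X : {set V}) x u w : x \in inner X -> joins x u w -> w \in X.
Proof. by rewrite /inner inE => /andP [sX tX] /orP [/andP [_ /eqP <-] | /andP [/eqP <- _]]. Qed.

Lemma inner_le1 (X : {set V}) : #|X| <= 1 -> inner X = set0.
Proof.
move/card_le1_eqP => X1; apply/setP => x; rewrite !inE.
by apply/negP => /andP [sX tX]; have := loopless_G x; rewrite (X1 _ _ sX tX) eqxx.
Qed.

Lemma cutC (X : {set V}) : cut (~: X) = cut X.
Proof. by apply/setP => x; rewrite !inE; case: (src x \in X); case: (tgt x \in X). Qed.

Lemma has_cycle_in_subset (X Y : {set V}) : X \subset Y -> has_cycle_in X -> has_cycle_in Y.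
Proof.
move=> XY [v0 [x0 [vs [es [vs0 sz uq inX cyc]]]]]; exists v0, x0, vs, es; split=> //.
by apply/allP => v /(allP inX); apply: (subsetP XY).
Qed.

Lemma cycle_inner_gt1 (X : {set V}) : has_cycle_in X -> 1 < #|inner X|.
Proof.
move=> [v0 [x0 [vs [es [vs0 sz /andP [uvs ues] inX cyc]]]]].
have vX i : nth v0 vs (i %% size vs) \in X by apply/(allP inX)/mem_nth; rewrite ltn_mod.
have cyc_inner i : i < size vs -> nth x0 es i \in inner X.
  by move=> ilt; apply: inner_joins (cyc i ilt) _ (vX i.+1); rewrite -(modn_small ilt).
have vs1 : 1 < size vs.
  rewrite ltn_neqAle vs0 andbT eq_sym; apply/eqP => vs_1.
  by have := joins_neq (cyc 0 vs0); rewrite vs_1 modnn eqxx.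
apply/card_gt1P; exists (nth x0 es 0), (nth x0 es 1).
by rewrite !cyc_inner ?nth_uniq ?sz // ltnW.
Qed.

Hypothesis cubic_G : cubic src tgt.

Lemma cubic_handshake (X : {set V}) : 3 * #|X| = 2 * #|inner X| + #|cut X|.
Proof.
have degrees : \sum_(v in X) #|[set x | incident x v]| = 3 * #|X|.
  by rewrite (eq_bigr (fun=> 3)) => [|v _]; [rewrite sum_nat_const mulnC | exact: cubic_G].
rewrite -degrees; under eq_bigr => v _ do rewrite card_sum_mem.
rewrite exchange_big (card_sum_mem (inner X)) (card_sum_mem (cut X)) big_distrr -big_split /=.
apply: eq_bigr => x _.
transitivity (\sum_(v in X) (src x == v : nat) + \sum_(v in X) (tgt x == v : nat)).
  rewrite -big_split; apply: eq_bigr => v _; rewrite inE /Defs.incident.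
  case: (eqVneq (src x) v) => [sv|]; case: (eqVneq (tgt x) v) => [tv|] //=.
  by have := loopless_G x; rewrite sv tv eqxx.
rewrite !sum_eq_mem /inner /Defs.cut !inE.
by case: (src x \in X); case: (tgt x \in X).
Qed.

Section Trails.
Variables (X : {set V}) (d : V) (e0 : E).

Definition trail (v0 : V) (vs : seq V) (es : seq E) : Prop :=
  [/\ size es = size vs, uniq (v0 :: vs), all (fun v => v \in X) (v0 :: vs), uniq es &
      forall i, i < size es -> joins (nth e0 es i) (nth d (v0 :: vs) i) (nth d (v0 :: vs) i.+1)].

Lemma trail_cons v0 vs es w y :
  trail v0 vs es -> w \in X -> w \notin v0 :: vs -> y \notin es -> joins y w v0 ->
  trail w (v0 :: vs) (y :: es).
Proof.
case=> sz uq inX ues tr wX wN yN jy; split=> /=; rewrite ?sz ?wN ?wX ?yN //.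
by case=> [|i] //=; rewrite ltnS -sz => /tr.
Qed.

Lemma trail_close v0 vs es w y :
  trail v0 vs es -> w \in vs -> y \notin es -> joins y v0 w -> has_cycle_in X.
Proof.
case=> sz /andP [v0N uvs] inX ues tr wvs yN jy.
set j := index w vs; have jlt : j < size vs by rewrite index_mem.
have szv : size (take j.+1 vs) = j.+1 by rewrite size_takel.
have sze : size (take j.+1 es) = j.+1 by rewrite size_takel // sz.
have nth_cyc i : i <= j.+1 -> nth d (v0 :: take j.+1 vs) i = nth d (v0 :: vs) i.
  by case: i => //= i ilt; rewrite nth_take.
exists d, e0, (v0 :: take j.+1 vs), (rcons (take j.+1 es) y); split=> //.
- by rewrite size_rcons sze /= szv.
- rewrite rcons_uniq (contra (@mem_take _ _ _ _) yN) /=.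
  by rewrite (contra (@mem_take _ _ _ _) v0N) !take_uniq.
- move: inX => /= /andP [-> /allP vsX]; apply/allP => v /mem_take; exact: vsX.
move=> i; rewrite /= szv ltnS => ilt; rewrite nth_rcons sze.
case: ltngtP ilt => // [ij _ | -> _].
  rewrite modn_small // !nth_cyc ?(ltnW ij) // nth_take //.
  by apply: tr; rewrite sz (leq_trans ij).
by rewrite ?eqxx modnn nth_cyc //= nth_index // joinsC.
Qed.

Definition min_inner_degree2 : Prop :=
  forall v, v \in X -> 1 < #|[set x in inner X | incident x v]|.

Lemma trail_grow v0 vs es :
  min_inner_degree2 -> trail v0 vs es ->
  has_cycle_in X \/ exists w y, trail w (v0 :: vs) (y :: es).
Proof.
move=> deg2 tr; have [sz /andP [v0N _] /andP [v0X _] _ jes] := tr.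
have [y /setIdP [yX yv0] yN0] := exists_neq_card_gt1 (nth e0 es 0) (deg2 v0 v0X).
have yN : y \notin es.
  apply/negP => /(nthP e0) [[|k] klt yk]; first by rewrite yk eqxx in yN0.
  have := jes _ klt; rewrite yk => /joins_incident/(_ yv0) /= v0_eq.
  by move: v0N; case: v0_eq => ->; rewrite mem_nth // -sz // (ltnW klt).
have [w jw] := incident_joins yv0.
have wX := joins_inner yX jw.
case: (boolP (w \in vs)) => wvs; first by left; apply: trail_close tr wvs yN jw.
right; exists w, y; apply: trail_cons tr wX _ yN _; last by rewrite joinsC.
by rewrite in_cons negb_or wvs eq_sym (joins_neq jw).
Qed.

End Trails.

Lemma min_inner_degree2_cycle (X : {set V}) :
  X != set0 -> min_inner_degree2 X -> has_cycle_in X.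
Proof.
case/set0Pn => v vX deg2.
have [e0 _] : exists e0, e0 \in [set x in inner X | incident x v].
  by apply/card_gt0P; apply: ltnW (deg2 v vX).
suff grow n v0 vs es : #|V| - size vs <= n -> trail X v e0 v0 vs es -> has_cycle_in X.
  by apply: (grow #|V| v [::] [::]); rewrite ?subn0 //; split; rewrite //= vX.
elim: n v0 vs es => [|n IH] v0 vs es bound tr; case: (trail_grow deg2 tr) => // [[w [y tr']]].
  have [_ /card_uniqP uniq_card _ _ _] := tr'.
  have := max_card (mem [:: w, v0 & vs]); rewrite uniq_card /= => /ltnW size_lt.
  by move: bound; rewrite leqn0 subn_eq0 leqNgt size_lt.
by apply: IH tr'; rewrite /= subnS -subn1 leq_subLR add1n.
Qed.

Lemma acyclic_inner_lt (X : {set V}) :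
  ~ has_cycle_in X -> X != set0 -> #|inner X| < #|X|.
Proof.
have [n] := ubnP #|X|; elim: n X => // n IH X Xlt acyc X0.
have [v vX deg_v] : exists2 v, v \in X & #|[set x in inner X | incident x v]| <= 1.
  case: (boolP [exists v in X, #|[set x in inner X | incident x v]| <= 1]) => [/exists_inP //|].
  move/exists_inPn => deg2; exfalso; apply: acyc; apply: min_inner_degree2_cycle X0 _.
  by move=> v /deg2; rewrite ltnNge.
have cardX : #|X| = #|X :\ v|.+1 by rewrite (cardsD1 v X) vX.
case: (eqVneq (X :\ v) set0) => [Xv0 | Xv0].
  by rewrite inner_le1 ?cards0 // cardX Xv0 cards0.
have inner_split : inner X \subset inner (X :\ v) :|: [set x in inner X | incident x v].
  apply/subsetP => x; rewrite /inner !inE /Defs.incident => /andP [-> ->].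
  by case: (src x == v); case: (tgt x == v).
have acyc_v : ~ has_cycle_in (X :\ v).
  by move=> cyc; apply/acyc/(has_cycle_in_subset (subsetDl _ _) cyc).
have lt_v : #|X :\ v| < n by rewrite -ltnS -cardX.
have := IH _ lt_v acyc_v Xv0; have := subset_leq_card inner_split.
have := (leq_card_setU (inner (X :\ v)) [set x in inner X | incident x v]).1.
lia.
Qed.

Lemma acyclic_cut_ge (X : {set V}) :
  ~ has_cycle_in X -> X != set0 -> #|X| + 2 <= #|cut X|.
Proof. by move=> acyc X0; have := cubic_handshake X; have := acyclic_inner_lt acyc X0; lia. Qed.

Hypothesis cyc4conn_G : cyc4conn src tgt.

Lemma cut_le3_acyclic_side (X : {set V}) :
  X != set0 -> ~: X != set0 -> #|cut X| <= 3 ->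
  #|X| + 2 <= #|cut X| \/ #|~: X| + 2 <= #|cut X|.
Proof.
move=> X0 Xc0 cut3.
case: (classic (has_cycle_in X)) => [cX | acyc]; first last.
  by left; apply: acyclic_cut_ge.
case: (classic (has_cycle_in (~: X))) => [cXc | acyc]; first last.
  by right; rewrite -cutC; apply: acyclic_cut_ge.
by exfalso; apply: (cyc4conn_G (conj X0 Xc0) (conj cX cXc)); lia.
Qed.

Lemma cut_ge3 (X : {set V}) : X != set0 -> ~: X != set0 -> 3 <= #|cut X|.
Proof.
move=> X0 Xc0; rewrite leqNgt; apply/negP => cut2.
have := card_gt0 X; have := card_gt0 (~: X); rewrite X0 Xc0.
by case: (cut_le3_acyclic_side X0 Xc0 (ltnW cut2)); lia.
Qed.

Lemma inner_cut_le3 (X : {set V}) a b :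
  a \notin X -> b \notin X -> a != b -> #|cut X| <= 3 -> inner X = set0.
Proof.
move=> aX bX ab cut3; case: (eqVneq X set0) => [-> | X0]; first by rewrite inner_le1 ?cards0.
have Xc0 : ~: X != set0 by apply/set0Pn; exists a; rewrite inE.
have Xc1 : 1 < #|~: X| by apply/card_gt1P; exists a, b; rewrite !inE aX bX.
by case: (cut_le3_acyclic_side X0 Xc0 cut3) => small; apply: inner_le1; lia.
Qed.

Section Uncrossing.
Variables A C : {set V}.

Local Notation X := (A :&: C).
Local Notation P := (A :\: C).
Local Notation Q := (C :\: A).
Local Notation Y := (~: (A :|: C)).

(* Every set involved is a Boolean combination of [A] and [C], so each identity
   holds edgewise once we know on which sides of [A] and [C] the two ends lie. *)
Local Ltac count_edges :=
  rewrite /Defs.cut /inner /between !card_sum_mem -!big_split /=;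
  apply: eq_bigr; let z := fresh "z" in move=> z _; rewrite !inE;
  by case: (src z \in A); case: (src z \in C); case: (tgt z \in A); case: (tgt z \in C).

Lemma cyclic_4_cuts_nested x :
  cyclic_4_cut src tgt A -> cyclic_4_cut src tgt C ->
  src x \in A :&: C -> tgt x \notin A :|: C -> A \subset C \/ C \subset A.
Proof.
move=> [_ [cutA [cycA cycAc]]] [_ [cutC _]] sx tx.
case: (boolP (A \subset C)) => [|/subsetPn [u uA /negbTE uNC]]; first by left.
case: (boolP (C \subset A)) => [|/subsetPn [w wC /negbTE wNA]]; first by right.
exfalso; move: sx tx; rewrite !inE => /andP [sA sC] /norP [/negbTE tA /negbTE tC].
have cutA_parts : #|cut A| = #|between X Q| + #|between X Y| + #|between P Q| + #|between P Y|.
  count_edges.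
have cutC_parts : #|cut C| = #|between X P| + #|between X Y| + #|between P Q| + #|between Q Y|.
  count_edges.
have cutP_parts : #|cut P| = #|between X P| + #|between P Q| + #|between P Y| by count_edges.
have cutQ_parts : #|cut Q| = #|between X Q| + #|between P Q| + #|between Q Y| by count_edges.
have cutX_parts : #|cut X| = #|between X P| + #|between X Q| + #|between X Y| by count_edges.
have cutY_parts : #|cut Y| = #|between X Y| + #|between P Y| + #|between Q Y| by count_edges.
have innerA_parts : #|inner A| = #|inner X| + #|inner P| + #|between X P| by count_edges.
have innerAc_parts : #|inner (~: A)| = #|inner Q| + #|inner Y| + #|between Q Y| by count_edges.
have XY_gt0 : 0 < #|between X Y| by apply/card_gt0P; exists x; rewrite !inE sA sC tA tC.
have P_ge3 : 3 <= #|cut P|.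
  by apply: cut_ge3; apply/set0Pn; [exists u | exists (src x)]; rewrite !inE ?uA ?uNC ?sC.
have Q_ge3 : 3 <= #|cut Q|.
  by apply: cut_ge3; apply/set0Pn; [exists w | exists (src x)]; rewrite !inE ?wC ?wNA ?sA.
rewrite cutA_parts in cutA; rewrite cutC_parts in cutC.
rewrite cutP_parts in P_ge3; rewrite cutQ_parts in Q_ge3.
have [cutP3 cutQ3 small] := uncrossing_arith cutA cutC P_ge3 Q_ge3 XY_gt0.
rewrite -cutP_parts in cutP3; rewrite -cutQ_parts in cutQ3.
have st := loopless_G x.
have innerP0 : inner P = set0.
  by apply: (inner_cut_le3 _ _ st); rewrite ?cutP3 ?inE ?sC ?tA ?andbF.
have innerQ0 : inner Q = set0.
  by apply: (inner_cut_le3 _ _ st); rewrite ?cutQ3 ?inE ?sA ?tC ?andbF.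
case: small => [[cutX3 XP1] | [cutY3 QY1]].
  rewrite -cutX_parts in cutX3.
  have ut : u != tgt x by apply/eqP => ux; move: tA; rewrite -ux uA.
  have innerX0 : inner X = set0.
    by apply: (inner_cut_le3 _ _ ut cutX3); rewrite !inE ?uNC ?tA ?andbF.
  by have := cycle_inner_gt1 cycA; rewrite innerA_parts innerP0 innerX0 !cards0 ltnNge XP1.
rewrite -cutY_parts in cutY3.
have ws : w != src x by apply/eqP => wx; move: wNA; rewrite wx sA.
have innerY0 : inner Y = set0.
  by apply: (inner_cut_le3 _ _ ws cutY3); rewrite !inE ?wC ?sA ?orbT.
by have := cycle_inner_gt1 cycAc; rewrite innerAc_parts innerQ0 innerY0 !cards0 ltnNge QY1.
Qed.

End Uncrossing.

Lemma cyclic_4_cut_setC (B : {set V}) : cyclic_4_cut src tgt B -> cyclic_4_cut src tgt (~: B).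
Proof. by case=> [[B0 Bc0] [cut4 [cB cBc]]]; do !split; rewrite ?setCK ?cutC. Qed.

Section CutChain.
Variable e : E.

Definition source_side (B : {set V}) : Prop :=
  [/\ cyclic_4_cut src tgt B, src e \in B & tgt e \notin B].

Definition source_sideb (B : {set V}) : bool := excluded_middle_informative (source_side B).

Lemma source_sideP (B : {set V}) : reflect (source_side B) (source_sideb B).
Proof. exact: sumboolP. Qed.

Definition cut_chain (i : nat) : {set V} := \bigcup_(B | source_sideb B && (#|B| <= i)) B.

Lemma cut_chain_mono i j : i <= j -> cut_chain i \subset cut_chain j.
Proof.
move=> ij; apply/bigcupsP => B /andP [sideB Bi].
by apply: bigcup_sup; rewrite sideB (leq_trans Bi ij).
Qed.

Lemma source_side_exists (A : {set V}) :
  cyclic_4_cut src tgt A -> e \in cut A -> exists2 B, source_side B & cut A = cut B.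
Proof.
move=> cA; rewrite inE => /orP [] /andP [eA eNA]; first by exists A.
by exists (~: A); rewrite ?cutC //; split; rewrite ?inE ?negbK //; apply: cyclic_4_cut_setC.
Qed.

Lemma cut_chain_card (B : {set V}) : source_side B -> cut_chain #|B| = B.
Proof.
move=> sideB; have [cB sB tB] := sideB.
apply/eqP; rewrite eqEsubset; apply/andP; split; last first.
  by apply: bigcup_sup; rewrite leqnn andbT; apply/source_sideP.
apply/bigcupsP => B' /andP [/source_sideP [cB' sB' tB'] B'_le].
have [|||BB'] := cyclic_4_cuts_nested cB' cB (x := e); rewrite ?inE ?sB ?sB' ?negb_or ?tB ?tB' //.
by have/eqP <- : B == B' by rewrite eqEcard BB' B'_le.
Qed.

End CutChain.

End Multigraph.

Theorem mainTheorem13 (V E : finType) (src tgt : E -> V) (e : E) :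
  loopless src tgt ->
  cubic src tgt ->
  cyc4conn src tgt ->
  (exists A : {set V}, cyclic_4_cut src tgt A /\ e \in cut src tgt A) ->
  exists (k : nat) (As : nat -> {set V}),
    (forall i j, 1 <= i -> i <= j -> j <= k -> As i \subset As j) /\
    (forall A : {set V}, cyclic_4_cut src tgt A -> e \in cut src tgt A ->
       exists i, 1 <= i <= k /\ cut src tgt A = cut src tgt (As i)).
Proof.
move=> loopless_G cubic_G cyc4conn_G _.
exists #|V|, (cut_chain src tgt e); split=> [i j _ ij _ | A cA eA].
  exact: cut_chain_mono.
have [B sideB ->] := source_side_exists cA eA.
have [[[B0 _] _] _ _] := sideB.
by exists #|B|; rewrite card_gt0 B0 max_card cut_chain_card.
Qed.
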